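(* Let $P=(P_1,P_2,P_3)$ be the Pauli tuple and $\overline{P}=(P_1,P_2,-P_3)$ its entrywise complex conjugate. Then $\mathcal D_P=\mathcal D_P^\circ$ and $\mathcal D_{\overline{P}}=\mathcal D_{\overline{P}}^\circ$. Consequently $\mathcal D_P=\mathrm{mconv}(P)$, $P$ is a free extreme point of $\mathcal D_P$, every free extreme point of $\mathcal D_P$ is unitarily equivalent to $P$, and $\mathcal D_P$ is the matrix convex hull of its free extreme points.
   Context: $SM_n(\mathbb F)^g$ denotes the set of $g$-tuples of self-adjoint $n\times n$ matrices with entries in $\mathbb F\in\{\mathbb R,\mathbb C\}$, and $SM^g=\bigcup_n SM_n(\mathbb C)^g$. For $A=(A_1,\dots,A_g)\in SM_d(\mathbb C)^g$, the free spectrahedron is $\mathcal D_A=\bigcup_{n\ge1}\mathcal D_A(n)$ with $\mathcal D_A(n)=\{X\in SM_n(\mathbb C)^g: I-\sum_{i=1}^g A_i\otimes X_i\succeq 0\}$. A matrix convex set is a graded set $K=\bigcup_n K(n)$, $K(n)\subseteq SM_n^g$, closed under matrix convex combinations $\sum_{i} V_i^*X^{(i)}V_i$ with $X^{(i)}\in K(n_i)$, $V_i\in M_{n_i\times n}$, $\sum_i V_i^*V_i=I_n$; $\mathrm{mconv}(S)$ is the smallest matrix convex set containing $S$ (no closure). The free polar dual of a matrix convex set $K$ in $g$ variables is $K^\circ=\{X\in SM^g:\ \sum_{i=1}^g Y_i\otimes X_i\preceq I \text{ for all } Y\in K\}$. A point $X\in K(n)$ is a free extreme point of $K$ if whenever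 $X=\sum_i V_i^*X^{(i)}V_i$ is a matrix convex combination of points $X^{(i)}\in K$ with all $V_i\neq0$, each $X^{(i)}$ is unitarily equivalent to $X$ or to $X\oplus Z$ for some $Z\in K$. The Pauli tuple is $P=\left(\begin{bmatrix}1&0\\0&-1\end{bmatrix},\begin{bmatrix}0&1\\1&0\end{bmatrix},\begin{bmatrix}0&i\\-i&0\end{bmatrix}\right)$. *)

From HB Require Import structures.
From mathcomp Require Import all_boot all_order all_algebra.
From mathcomp Require Import complex mxtens.
From mathcomp Require Import reals.
Set Implicit Arguments. Unset Strict Implicit. Unset Printing Implicit Defensive.
Import Order.TTheory GRing.Theory Num.Theory.
Local Open Scope ring_scope.

Section FreeSpec.
Variable R : realType.
Local Notation C := R[i].

Definition adjmx (m n : nat) (A : 'M[C]_(m, n)) : 'M[C]_(n, m) :=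
  (map_mx Num.conj A)^T.

Definition selfadj (n : nat) (A : 'M[C]_n) : Prop := adjmx A = A.

Definition psd (n : nat) (A : 'M[C]_n) : Prop :=
  selfadj A /\ forall v : 'cV[C]_n, 0 <= (adjmx v *m A *m v) 0 0.

Definition tup (g n : nat) := 'I_g -> 'M[C]_n.

Definition SM (g n : nat) (X : tup g n) : Prop := forall i, selfadj (X i).

(* graded sets: K n is the level-n part K(n); only levels n >= 1 are meaningful *)
Definition gset (g : nat) := forall n : nat, tup g n -> Prop.

Definition gset_eq (g : nat) (K L : gset g) : Prop :=
  forall n, (0 < n)%N -> forall X : tup g n, K n X <-> L n X.

Definition gsubset (g : nat) (K L : gset g) : Prop :=
  forall n, (0 < n)%N -> forall X : tup g n, K n X -> L n X.

Definition pencil (g d n : nat) (A : tup g d) (X : tup g n) : 'M[C]_(d * n) :=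
  1%:M - \sum_(i < g) (A i *t X i).

Definition spectra (g d : nat) (A : tup g d) : gset g :=
  fun n X => (0 < n)%N /\ SM X /\ psd (pencil A X).

Definition polar (g : nat) (K : gset g) : gset g :=
  fun n X => (0 < n)%N /\ SM X /\
    forall m (Y : tup g m), (0 < m)%N -> K m Y -> psd (pencil Y X).

(* a term of a matrix convex combination (families are indexed by 'I_k) landing in level n:
   a point X^(j) of level m_j together with V_j : M_{m_j x n} *)
Definition mcterm (g n : nat) := {m : nat & (tup g m * 'M[C]_(m, n))%type}.

Definition mc_level (g n : nat) (t : mcterm g n) : nat := tag t.
Definition mc_pt (g n : nat) (t : mcterm g n) : tup g (mc_level t) := (tagged t).1.
Definition mc_V (g n : nat) (t : mcterm g n) : 'M[C]_(mc_level t, n) := (tagged t).2.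

Definition is_mcc (g : nat) (K : gset g) (n k : nat) (ts : 'I_k -> mcterm g n) : Prop :=
  (forall j, (0 < mc_level (ts j))%N /\ K (mc_level (ts j)) (mc_pt (ts j))) /\
  \sum_(j < k) (adjmx (mc_V (ts j)) *m mc_V (ts j)) = 1%:M.

Definition mcc_val (g n k : nat) (ts : 'I_k -> mcterm g n) : tup g n :=
  fun i => \sum_(j < k) (adjmx (mc_V (ts j)) *m mc_pt (ts j) i *m mc_V (ts j)).

Definition matconvex (g : nat) (K : gset g) : Prop :=
  (forall n (X : tup g n), (0 < n)%N -> K n X -> SM X) /\
  forall n k (ts : 'I_k -> mcterm g n), (0 < n)%N -> is_mcc K ts -> K n (mcc_val ts).

Definition mconv (g : nat) (S : gset g) : gset g :=
  fun n X => (0 < n)%N /\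
    forall K : gset g, matconvex K -> gsubset S K -> K n X.

Definition gpoint (g d : nat) (P : tup g d) : gset g :=
  fun n X => exists e : d = n, (fun i => castmx (e, e) (P i)) = X.

(* unitary equivalence: X = U^* Y U with U unitary (U^* U = I, U U^* = I,
   which forces the sizes to agree) *)
Definition ueq (g n m : nat) (X : tup g n) (Y : tup g m) : Prop :=
  exists U : 'M[C]_(m, n),
    adjmx U *m U = 1%:M /\ U *m adjmx U = 1%:M /\
    forall i, adjmx U *m Y i *m U = X i.

Definition dsum (g n m : nat) (X : tup g n) (Z : tup g m) : tup g (n + m) :=
  fun i => block_mx (X i) 0 0 (Z i).

Definition free_extreme (g : nat) (K : gset g) : gset g :=
  fun n X => (0 < n)%N /\ K n X /\
    forall k (ts : 'I_k -> mcterm g n),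
      is_mcc K ts ->
      (forall j, mc_V (ts j) != 0) ->
      mcc_val ts = X ->
      forall j,
        ueq (mc_pt (ts j)) X \/
        exists m (Z : tup g m), (0 < m)%N /\ K m Z /\ ueq (mc_pt (ts j)) (dsum X Z).

Definition mx2 (a b c d : C) : 'M[C]_2 :=
  \matrix_(i < 2, j < 2)
    if (i : nat) == 0%N then (if (j : nat) == 0%N then a else b)
    else (if (j : nat) == 0%N then c else d).

Definition triple (A1 A2 A3 : 'M[C]_2) : tup 3 2 :=
  fun k => match (k : nat) with 0 => A1 | 1 => A2 | _ => A3 end.

Local Open Scope complex_scope.
Definition Pauli : tup 3 2 :=
  triple (mx2 1 0 0 (-1)) (mx2 0 1 1 0) (mx2 0 'i (- 'i) 0).
Definition Pauli_bar : tup 3 2 :=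
  triple (mx2 1 0 0 (-1)) (mx2 0 1 1 0) (- mx2 0 'i (- 'i) 0).

End FreeSpec.

From HB Require Import structures.
From mathcomp Require Import all_boot all_order all_algebra.
From mathcomp Require Import complex mxtens.
From mathcomp Require Import reals.
From mathcomp Require Import sesquilinear spectral.
From mathcomp Require Import ring zify.
From Stdlib Require Import FunctionalExtensionality.
Set Implicit Arguments. Unset Strict Implicit. Unset Printing Implicit Defensive.
Import Order.TTheory GRing.Theory Num.Theory.
Local Open Scope ring_scope.

(* A tuple X lies in D_P exactly when it is the image of P under a unital
   completely positive map: if L_P(X)/2 = B^* B, the rows of B, reshaped into
   2 x n matrices and twisted by [[0,1],[-1,0]], are Kraus operators K_l with
   sum_l K_l^* K_l = I and X_i = sum_l K_l^* P_i K_l.  Then L_Y(X) is a sum of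
   congruences of L_P(X), so D_P lies in its polar, and the reverse inclusion
   only uses P in D_P; entrywise conjugation transports this to the conjugate
   tuple, and every matrix convex set containing P contains D_P.
   If P = sum_j V_j^* X^(j) V_j, composing with Kraus decompositions of the
   X^(j) gives a unital map fixing P.  Its Kraus operators commute with the
   self-adjoint unitaries P_i, hence are scalars, so each V_j is a multiple of
   an isometry intertwining X^(j) with P, which splits X^(j) as P (+) Z.
   Conversely, the Kraus decomposition of a free extreme point X writes it as a
   combination of copies of P, so X is equivalent to P, or P to X (+) Z; the
   latter forces X and Z to be 1 x 1, hence commuting, which P_1 and P_2 are
   not. *)

Section Adjoint.
Variable R : realType.
Local Notation C := R[i].

Lemma adjmxE m n (A : 'M[C]_(m, n)) i j : adjmx A i j = (A j i)^*.
Proof. by rewrite !mxE. Qed.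

Lemma adjmx_trC m n (A : 'M[C]_(m, n)) : (A ^t* )%sesqui = adjmx A.
Proof. by apply/matrixP=> i j; rewrite !mxE. Qed.

Lemma adjmxK m n (A : 'M[C]_(m, n)) : adjmx (adjmx A) = A.
Proof. by apply/matrixP=> i j; rewrite !adjmxE conjCK. Qed.

Lemma adjmxM m n p (A : 'M[C]_(m, n)) (B : 'M[C]_(n, p)) :
  adjmx (A *m B) = adjmx B *m adjmx A.
Proof. by rewrite /adjmx map_mxM trmx_mul. Qed.

Lemma adjmxD m n (A B : 'M[C]_(m, n)) : adjmx (A + B) = adjmx A + adjmx B.
Proof. by rewrite /adjmx map_mxD linearD. Qed.

Lemma adjmxN m n (A : 'M[C]_(m, n)) : adjmx (- A) = - adjmx A.
Proof. by rewrite /adjmx map_mxN linearN. Qed.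

Lemma adjmxB m n (A B : 'M[C]_(m, n)) : adjmx (A - B) = adjmx A - adjmx B.
Proof. by rewrite adjmxD adjmxN. Qed.

Lemma adjmx0 m n : adjmx (0 : 'M[C]_(m, n)) = 0.
Proof. by rewrite /adjmx map_mx0 trmx0. Qed.

Lemma adjmxZ m n a (A : 'M[C]_(m, n)) : adjmx (a *: A) = a^* *: adjmx A.
Proof. by apply/matrixP=> i j; rewrite !mxE rmorphM. Qed.

Lemma adjmx_scalar n a : adjmx (a%:M : 'M[C]_n) = a^*%:M.
Proof. by rewrite /adjmx map_scalar_mx tr_scalar_mx. Qed.

Lemma adjmx1 n : adjmx (1%:M : 'M[C]_n) = 1%:M.
Proof. by rewrite adjmx_scalar conjC1. Qed.

Lemma adjmx_sum m n I (r : seq I) (P : pred I) (F : I -> 'M[C]_(m, n)) :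
  adjmx (\sum_(i <- r | P i) F i) = \sum_(i <- r | P i) adjmx (F i).
Proof. by rewrite /adjmx raddf_sum /= raddf_sum. Qed.

Lemma adjmx_tens m n p q (A : 'M[C]_(m, n)) (B : 'M[C]_(p, q)) :
  adjmx (A *t B) = adjmx A *t adjmx B.
Proof. by apply/matrixP=> i j; rewrite !mxE rmorphM. Qed.

Lemma adjmx_col m1 m2 n (A : 'M[C]_(m1, n)) (B : 'M[C]_(m2, n)) :
  adjmx (col_mx A B) = row_mx (adjmx A) (adjmx B).
Proof. by rewrite /adjmx map_col_mx tr_col_mx. Qed.

Lemma map_conjK m n (A : 'M[C]_(m, n)) : map_mx Num.conj (map_mx Num.conj A) = A.
Proof. by apply/matrixP=> i j; rewrite !mxE conjCK. Qed.

Lemma tr_adjmx_mul m n (Q : 'M[C]_(m, n)) :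
  \tr (adjmx Q *m Q) = \sum_b \sum_a `|Q a b| ^+ 2.
Proof.
apply: eq_bigr => b _; rewrite mxE; apply: eq_bigr => a _.
by rewrite adjmxE normCK mulrC.
Qed.

Lemma tr_adjmx_mul_ge0 m n (Q : 'M[C]_(m, n)) : 0 <= \tr (adjmx Q *m Q).
Proof. by rewrite tr_adjmx_mul; do 2!(apply: sumr_ge0 => ? _); rewrite exprn_ge0. Qed.

Lemma tr_adjmx_mul_eq0 m n (Q : 'M[C]_(m, n)) : \tr (adjmx Q *m Q) = 0 -> Q = 0.
Proof.
rewrite tr_adjmx_mul => Q0; apply/matrixP=> a b; rewrite mxE.
have col0 : \sum_a `|Q a b| ^+ 2 = 0.
  apply: (psumr_eq0P _ Q0) => // c _.
  by apply: sumr_ge0 => ? _; rewrite exprn_ge0.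
have : `|Q a b| ^+ 2 = 0.
  by apply: (psumr_eq0P _ col0) => // ? _; rewrite exprn_ge0.
by move/eqP; rewrite expf_eq0 /= normr_eq0 => /eqP.
Qed.

Lemma sum_adjmx_mul_eq0 (I : finType) (f : I -> nat) m n
    (Q : forall l, 'I_(f l) -> 'M[C]_(m, n)) :
  \sum_l \sum_r adjmx (Q l r) *m Q l r = 0 -> forall l r, Q l r = 0.
Proof.
move/(congr1 mxtrace); rewrite mxtrace0 raddf_sum /= => tr0 l r.
have trl0 : \tr (\sum_r adjmx (Q l r) *m Q l r) = 0.
  apply: (psumr_eq0P _ tr0) => // l' _.
  by rewrite raddf_sum sumr_ge0 // => r' _; apply: tr_adjmx_mul_ge0.
apply: tr_adjmx_mul_eq0; rewrite raddf_sum in trl0.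
by apply: (psumr_eq0P _ trl0) => // r' _; apply: tr_adjmx_mul_ge0.
Qed.

End Adjoint.

Section Psd.
Variable R : realType.
Local Notation C := R[i].

Lemma psd_congr m n (A : 'M[C]_m) (W : 'M[C]_(m, n)) :
  psd A -> psd (adjmx W *m A *m W).
Proof.
move=> [sA pA]; split; first by rewrite /selfadj !adjmxM adjmxK sA mulmxA.
by move=> v; have := pA (W *m v); rewrite adjmxM !mulmxA.
Qed.

Lemma psd0 n : psd (0 : 'M[C]_n).
Proof. by split=> [|v]; rewrite ?/selfadj ?adjmx0 // mulmx0 mul0mx mxE. Qed.

Lemma psdD n (A B : 'M[C]_n) : psd A -> psd B -> psd (A + B).
Proof.
move=> [sA pA] [sB pB]; split; first by rewrite /selfadj adjmxD sA sB.
by move=> v; rewrite mulmxDr mulmxDl mxE addr_ge0.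
Qed.

Lemma psd_sum n I (r : seq I) (P : pred I) (F : I -> 'M[C]_n) :
  (forall i, P i -> psd (F i)) -> psd (\sum_(i <- r | P i) F i).
Proof.
move=> psdF; elim/big_rec: _ => [|i x Pi psdx]; first exact: psd0.
exact: psdD (psdF i Pi) psdx.
Qed.

Lemma psd_adjmx_mul m n (B : 'M[C]_(m, n)) : psd (adjmx B *m B).
Proof.
split=> [|v]; first by rewrite /selfadj adjmxM adjmxK.
rewrite mulmxA -adjmxM -mulmxA mxE sumr_ge0 // => i _.
by rewrite adjmxE mulrC mul_conjC_ge0.
Qed.

Lemma psdZ n (c : C) (A : 'M[C]_n) : 0 <= c -> psd A -> psd (c *: A).
Proof.
move=> c0 [sA pA]; split; first by rewrite /selfadj adjmxZ sA conj_Creal ?ger0_real.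
by move=> v; rewrite -scalemxAr -scalemxAl mxE mulr_ge0.
Qed.

Lemma psd_map_conj n (A : 'M[C]_n) : psd (map_mx Num.conj A) <-> psd A.
Proof.
suff psd_of_conj (B : 'M[C]_n) : psd (map_mx Num.conj B) -> psd B.
  by split=> [|psdA]; apply: psd_of_conj; rewrite ?map_conjK.
move=> [sB pB]; split.
  apply/matrixP=> i j; have /matrixP/(_ i j) := sB.
  by rewrite !adjmxE !mxE conjCK => ->; rewrite conjCK.
move=> v; have := pB (map_mx Num.conj v).
suff -> : adjmx (map_mx Num.conj v) *m map_mx Num.conj B *m map_mx Num.conj v =
          map_mx Num.conj (adjmx v *m B *m v) by rewrite mxE conjC_ge0.
by rewrite !map_mxM; congr (_ *m _ *m _); apply/matrixP=> i j; rewrite !mxE.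
Qed.

Definition psd_root n (M : 'M[C]_n) : 'M[C]_n :=
  diag_mx (map_mx sqrtC (spectral_diag M)) *m spectralmx M.

Lemma psd_rootP n (M : 'M[C]_n) : psd M -> M = adjmx (psd_root M) *m psd_root M.
Proof.
move=> [sM pM]; set Q := spectralmx M; set d := spectral_diag M.
have QQ : Q *m adjmx Q = 1%:M.
  by rewrite -adjmx_trC; apply/unitarymxP/spectral_unitarymx.
have eM : M = adjmx Q *m diag_mx d *m Q.
  have /orthomx_spectralP : M \is normalmx.
    by apply/normalmxP; rewrite adjmx_trC (sM : adjmx M = M).
  by rewrite invmx_unitary ?spectral_unitarymx ?adjmx_trC.
have d_ge0 k : 0 <= d 0 k.
  have := pM (adjmx Q *m delta_mx k 0).
  rewrite eM !adjmxM adjmxK !mulmxA -!(mulmxA _ Q (adjmx Q)) QQ !mulmx1.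
  rewrite -mulmxA mul_diag_mx mxE (bigD1 k) //= big1 ?addr0 => [|j /negbTE njk].
    by rewrite !mxE !eqxx mulr1 conjC1 mul1r.
  by rewrite !mxE njk /= mulr0n !mulr0.
rewrite [LHS]eM /psd_root adjmxM !mulmxA -[_ *m adjmx _ *m _]mulmxA.
congr (_ *m _ *m _).
apply/matrixP=> i j; rewrite mul_mx_diag !mxE.
have [->|nij] := eqVneq i j; last by rewrite !mulr0n rmorph0 mul0r.
by rewrite !mulr1n conj_Creal ?ger0_real ?sqrtC_ge0 // -expr2 sqrtCK.
Qed.

End Psd.

Section Pencil.
Variable R : realType.
Local Notation C := R[i].

Lemma tens1mx m n : (1%:M : 'M[C]_m) *t (1%:M : 'M_n) = 1%:M.
Proof.
apply/matrixP=> i j.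
case: (mxtens_indexP i) => a b; case: (mxtens_indexP j) => c e.
rewrite tensmxE !mxE (can_eq (@mxtens_indexK _ _)) xpair_eqE.
by case: (a == c); case: (b == e); rewrite ?mulr1 ?mulr0.
Qed.

Lemma tensmx_suml m n p q I (r : seq I) (P : pred I) (F : I -> 'M[C]_(m, n))
    (B : 'M[C]_(p, q)) :
  (\sum_(i <- r | P i) F i) *t B = \sum_(i <- r | P i) (F i *t B).
Proof.
apply/matrixP=> x y; rewrite summxE [LHS]mxE summxE mulr_suml.
by apply: eq_bigr => i _; rewrite !mxE.
Qed.

Lemma tensmx_sumr m n p q I (r : seq I) (P : pred I) (A : 'M[C]_(m, n))
    (F : I -> 'M[C]_(p, q)) :
  A *t (\sum_(i <- r | P i) F i) = \sum_(i <- r | P i) (A *t F i).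
Proof.
apply/matrixP=> x y; rewrite summxE [LHS]mxE summxE mulr_sumr.
by apply: eq_bigr => i _; rewrite !mxE.
Qed.

Lemma pencil_congr g d d' n n' (A : tup R g d) (X : tup R g n)
    (K : 'M[C]_(d, d')) (V : 'M[C]_(n, n')) :
  adjmx (K *t V) *m pencil A X *m (K *t V) =
  (adjmx K *m K) *t (adjmx V *m V) -
    \sum_i (adjmx K *m A i *m K) *t (adjmx V *m X i *m V).
Proof.
rewrite /pencil adjmx_tens mulmxBr mulmxBl mulmx1 tensmx_mul; congr (_ - _).
rewrite mulmx_sumr mulmx_suml; apply: eq_bigr => i _.
by rewrite !tensmx_mul.
Qed.

Lemma pencil_mcc_val g d n k (A : tup R g d) (ts : 'I_k -> mcterm R g n) :
  \sum_j adjmx (mc_V (ts j)) *m mc_V (ts j) = 1%:M ->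
  pencil A (mcc_val ts) =
  \sum_j adjmx (1%:M *t mc_V (ts j)) *m pencil A (mc_pt (ts j)) *m
         (1%:M *t mc_V (ts j)).
Proof.
move=> sumV1; under eq_bigr do rewrite pencil_congr adjmx1 mulmx1.
under eq_bigr do under eq_bigr do rewrite mul1mx mulmx1.
rewrite sumrB -tensmx_sumr sumV1 tens1mx exchange_big /=; congr (_ - _).
by apply: eq_bigr => i _; rewrite tensmx_sumr.
Qed.

Lemma pencil_kraus g d m n k (A : tup R g d) (X : tup R g n)
    (K : 'I_k -> 'M[C]_(d, m)) :
  \sum_l adjmx (K l) *m K l = 1%:M ->
  pencil (fun i => \sum_l adjmx (K l) *m A i *m K l) X =
  \sum_l adjmx (K l *t 1%:M) *m pencil A X *m (K l *t 1%:M).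
Proof.
move=> sumK1; under eq_bigr do rewrite pencil_congr adjmx1 mulmx1.
under eq_bigr do under eq_bigr do rewrite mul1mx mulmx1.
rewrite sumrB -tensmx_suml sumK1 tens1mx exchange_big /=; congr (_ - _).
by apply: eq_bigr => i _; rewrite tensmx_suml.
Qed.

Lemma pencil_entry g d n (A : tup R g d) (X : tup R g n) x c y e :
  pencil A X (mxtens_index (x, c)) (mxtens_index (y, e)) =
  (x == y)%:R * (c == e)%:R - \sum_i A i x y * X i c e.
Proof.
rewrite /pencil [LHS]mxE -tens1mx tensmxE !mxE summxE; congr (_ - _).
by apply: eq_bigr => i _; rewrite tensmxE.
Qed.

Lemma spectra_matconvex g d (A : tup R g d) : matconvex (spectra A).
Proof.
split=> [n X _ [_ []] //|n k ts n0 [tsA sumV1]]; split=> //; split.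
  move=> i; rewrite /selfadj /mcc_val adjmx_sum; apply: eq_bigr => j _.
  have [_ [_ [sXj _]]] := tsA j.
  by rewrite !adjmxM adjmxK (sXj i : adjmx _ = _) mulmxA.
rewrite pencil_mcc_val //; apply: psd_sum => j _; apply: psd_congr.
by have [_ [_ []]] := tsA j.
Qed.

End Pencil.

Section Conjugation.
Variable R : realType.

Definition tconj g n (X : tup R g n) : tup R g n := fun i => map_mx Num.conj (X i).

Lemma tconjK g n (X : tup R g n) : tconj (tconj X) = X.
Proof. by apply: functional_extensionality => i; rewrite /tconj map_conjK. Qed.

Lemma SM_tconj g n (X : tup R g n) : SM X -> SM (tconj X).
Proof.
move=> selfX i; apply/matrixP=> a b; rewrite adjmxE !mxE.
by have /matrixP/(_ b a) := selfX i; rewrite adjmxE => <-; rewrite conjCK.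
Qed.

Lemma pencil_tconj g d n (A : tup R g d) (X : tup R g n) :
  pencil (tconj A) (tconj X) = map_mx Num.conj (pencil A X).
Proof.
rewrite /pencil map_mxB map_mx1; congr (_ - _).
apply/matrixP=> p q; rewrite mxE !summxE raddf_sum /=; apply: eq_bigr => i _.
by rewrite !mxE rmorphM.
Qed.

Lemma spectra_tconj g d n (A : tup R g d) (X : tup R g n) :
  spectra (tconj A) X <-> spectra A (tconj X).
Proof.
split=> -[n0 [selfX psdL]]; (split; first exact: n0); split.
- exact: SM_tconj.
- by rewrite -psd_map_conj -pencil_tconj tconjK.
- by rewrite -[X]tconjK; apply: SM_tconj.
- by rewrite -[X]tconjK pencil_tconj psd_map_conj.
Qed.

Lemma polar_spectra_tconj g d n (A : tup R g d) (X : tup R g n) :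
  polar (spectra (tconj A)) X <-> polar (spectra A) (tconj X).
Proof.
split=> -[n0 [selfX psdL]]; (split; first exact: n0); split.
- exact: SM_tconj.
- move=> m Y m0 AY; have /(psdL _ _ m0) : spectra (tconj A) (tconj Y).
    by apply/spectra_tconj; rewrite tconjK.
  by rewrite -psd_map_conj -pencil_tconj tconjK.
- by rewrite -[X]tconjK; apply: SM_tconj.
- move=> m Y m0 /spectra_tconj /(psdL _ _ m0).
  by rewrite pencil_tconj psd_map_conj.
Qed.

Lemma self_polar_tconj g d (A : tup R g d) :
  gset_eq (spectra A) (polar (spectra A)) ->
  gset_eq (spectra (tconj A)) (polar (spectra (tconj A))).
Proof.
by move=> selfpolar n n0 X; rewrite spectra_tconj polar_spectra_tconj; apply: selfpolar.
Qed.

End Conjugation.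

Section UnitaryEquivalence.
Variable R : realType.
Local Notation C := R[i].

Lemma gpoint_refl g d (A : tup R g d) : gpoint A A.
Proof. by exists erefl; apply: functional_extensionality => i; rewrite castmx_id. Qed.

Lemma ueq_sym g n m (X : tup R g n) (Y : tup R g m) : ueq X Y -> ueq Y X.
Proof.
move=> [U [isoU [coisoU UYU]]]; exists (adjmx U); rewrite adjmxK.
do 2!split=> //; move=> i.
by rewrite -UYU !mulmxA coisoU mul1mx -mulmxA coisoU mulmx1.
Qed.

Lemma ueq_dim g n m (X : tup R g n) (Y : tup R g m) : ueq X Y -> n = m.
Proof.
move=> [U [isoU [coisoU _]]]; apply/eqP; rewrite -(eqr_nat C).
by rewrite -!mxtrace1 -isoU -coisoU mxtrace_mulC.
Qed.

Lemma ueq_comm g n m (X : tup R g n) (Y : tup R g m) i j :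
  ueq X Y -> Y i *m Y j = Y j *m Y i -> X i *m X j = X j *m X i.
Proof.
move=> [U [_ [coisoU UYU]]] YijC; rewrite -!UYU !mulmxA.
by rewrite -!(mulmxA _ U (adjmx U)) coisoU !mulmx1 -!(mulmxA (adjmx U)) YijC.
Qed.

Lemma dsum11_comm g (X Z : tup R g 1) i j :
  dsum X Z i *m dsum X Z j = dsum X Z j *m dsum X Z i.
Proof.
have comm11 (A B : 'M[C]_1) : A *m B = B *m A.
  by rewrite [A]mx11_scalar [B]mx11_scalar -!scalar_mxM mulrC.
by rewrite /dsum !mulmx_block !mulmx0 !mul0mx !addr0 !add0r comm11 [Z i *m _]comm11.
Qed.

End UnitaryEquivalence.

Section Isometries.
Variable R : realType.
Local Notation C := R[i].

Lemma isometry_complement m d (U0 : 'M[C]_(m, d)) : adjmx U0 *m U0 = 1%:M ->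
  exists r (S : 'M[C]_(r, m)), [/\ S *m adjmx S = 1%:M, S *m U0 = 0 & (d + r)%N = m].
Proof.
move=> isoU0; set A := adjmx U0.
have A_unitary : A \is unitarymx by apply/unitarymxP; rewrite adjmx_trC /A adjmxK.
set O := orthomx Num.conj (mx_of_hermitian (hermitian1mx m)) A.
exists (\rank O), (schmidt (row_base O)); split.
- rewrite -adjmx_trC; apply/unitarymxP/schmidt_unitarymx; exact: rank_leq_col.
- have : (schmidt (row_base O) <= O)%MS.
    by rewrite eqmx_schmidt_free ?row_base_free // eq_row_base.
  by move/orthomx1P; rewrite adjmx_trC /A adjmxK.
- rewrite rank_ortho (mxrank_unitary A_unitary) subnKC //.
  by rewrite -(mxrank_unitary A_unitary) rank_leq_col.
Qed.

Lemma isometry_coisometry m d (U0 : 'M[C]_(m, d)) :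
  adjmx U0 *m U0 = 1%:M -> d = m -> U0 *m adjmx U0 = 1%:M.
Proof.
move=> isoU0 dm; have A_unitary : adjmx U0 \is unitarymx.
  by apply/unitarymxP; rewrite adjmx_trC adjmxK.
by have := mulmxKtV 1%:M A_unitary dm; rewrite mul1mx adjmx_trC adjmxK.
Qed.

Lemma intertwiner_ueq_dsum g d m (K : gset R g) (A : tup R g d) (X : tup R g m)
    (U0 : 'M[C]_(m, d)) :
  matconvex K -> (0 < m)%N -> K m X ->
  adjmx U0 *m U0 = 1%:M -> (forall i, X i *m U0 = U0 *m A i) ->
  ueq X A \/ exists m' (Z : tup R g m'), (0 < m')%N /\ K m' Z /\ ueq X (dsum A Z).
Proof.
move=> [SM_K convK] m0 KX isoU0 XU0; have selfX := SM_K _ _ m0 KX.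
have [[|r] [S [coisoS SU0 dm]]] := isometry_complement isoU0.
  left; exists (adjmx U0); rewrite adjmxK.
  have coisoU0 := isometry_coisometry isoU0 (etrans (esym (addn0 d)) dm).
  split=> //; split=> // i.
  by rewrite -XU0 -mulmxA coisoU0 mulmx1.
(* U = [U0^*; S] is unitary and conjugates X into A (+) S X S^*. *)
pose Z i := S *m X i *m adjmx S; pose U := col_mx (adjmx U0) S.
have SXU0 i : S *m X i *m U0 = 0 by rewrite -mulmxA XU0 mulmxA SU0 mul0mx.
have U0XS i : adjmx U0 *m X i *m adjmx S = 0.
  by rewrite -(selfX i) -adjmxM -[adjmx S]adjmxK -adjmxM adjmxK mulmxA SXU0 adjmx0.
have coisoU : U *m adjmx U = 1%:M.
  rewrite /U adjmx_col mul_col_row adjmxK isoU0 coisoS SU0 -adjmxM SU0 adjmx0.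
  by rewrite (scalar_mx_block d r.+1 1).
have isoU : adjmx U *m U = 1%:M.
  by have := @isometry_coisometry _ _ (adjmx U); rewrite adjmxK; apply.
have UXU i : U *m X i *m adjmx U = dsum A Z i.
  rewrite /U /dsum /Z adjmx_col mul_col_mx mul_col_row adjmxK SXU0 U0XS.
  by rewrite -mulmxA XU0 mulmxA isoU0 mul1mx.
right; exists r.+1, Z; split=> //; split; last first.
  exists U; split=> //; split=> // i.
  by rewrite -UXU !mulmxA isoU mul1mx -mulmxA isoU mulmx1.
pose ts (_ : 'I_1) : mcterm R g r.+1 := existT _ m (X, adjmx S).
have -> : Z = mcc_val ts.
  apply: functional_extensionality => i.
  by rewrite /mcc_val big_ord1 /mc_V /mc_pt /= adjmxK.
apply: convK => //; split=> [j|]; first by split.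
by rewrite big_ord1 /mc_V /= adjmxK.
Qed.

End Isometries.

Section Kraus.
Variable R : realType.
Local Notation C := R[i].

Lemma kraus_fixed_involution_comm (I : finType) (f : I -> nat) d (A : 'M[C]_d)
    (W : forall l, 'I_(f l) -> 'M[C]_d) :
  adjmx A = A -> A *m A = 1%:M ->
  \sum_l \sum_r adjmx (W l r) *m W l r = 1%:M ->
  \sum_l \sum_r adjmx (W l r) *m A *m W l r = A ->
  forall l r, A *m W l r = W l r *m A.
Proof.
move=> adjA AA sumW1 sumWA l r; apply/eqP; rewrite -subr_eq0; apply/eqP; move: l r.
apply: sum_adjmx_mul_eq0.
(* The sum of squares expands to 1 - A^2 - A^2 + A^2 = 0. *)
have -> : \sum_l \sum_r adjmx (A *m W l r - W l r *m A) *m (A *m W l r - W l r *m A) =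
  \sum_l \sum_r (adjmx (W l r) *m W l r - (adjmx (W l r) *m A *m W l r) *m A -
                 A *m (adjmx (W l r) *m A *m W l r) +
                 A *m (adjmx (W l r) *m W l r) *m A).
  apply: eq_bigr => l _; apply: eq_bigr => r _.
  rewrite adjmxB !adjmxM adjA mulmxBl !mulmxBr !mulmxA -[_ *m A *m A]mulmxA AA mulmx1.
  by rewrite opprB addrA [LHS]addrAC.
under eq_bigr do rewrite big_split !sumrB -!mulmx_suml -!mulmx_sumr.
rewrite big_split /= !sumrB -!mulmx_suml -!mulmx_sumr sumW1 sumWA mulmx1 AA.
by rewrite subrr add0r addNr.
Qed.

Lemma kraus_scalar_intertwiner g d n k (A : tup R g d) (X : tup R g n)
    (V : 'M[C]_(n, d)) (K : 'I_k -> 'M[C]_(d, n)) (w : 'I_k -> C) :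
  V != 0 -> \sum_r adjmx (K r) *m K r = 1%:M ->
  (forall i, \sum_r adjmx (K r) *m A i *m K r = X i) ->
  (forall r, K r *m V = (w r)%:M) ->
  exists U0 : 'M[C]_(n, d), adjmx U0 *m U0 = 1%:M /\ forall i, X i *m U0 = U0 *m A i.
Proof.
move=> V_neq0 sumK1 sumKA KV.
have VE : V = \sum_r w r *: adjmx (K r).
  rewrite -[LHS]mul1mx -sumK1 mulmx_suml; apply: eq_bigr => r _.
  by rewrite -mulmxA KV mul_mx_scalar.
have XV i : X i *m V = V *m A i.
  rewrite -sumKA mulmx_suml {2}VE mulmx_suml; apply: eq_bigr => r _.
  by rewrite -mulmxA KV mul_mx_scalar scalemxAl.
pose c := \sum_r w r * (w r)^*.
have VV : adjmx V *m V = c%:M.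
  rewrite {2}VE mulmx_sumr /c raddf_sum; apply: eq_bigr => r _.
  by rewrite -scalemxAr -adjmxM KV adjmx_scalar scale_scalar_mx.
have c_gt0 : 0 < c.
  rewrite lt_def sumr_ge0 ?andbT => [|r _]; last exact: mul_conjC_ge0.
  apply: contra V_neq0 => /eqP c0; apply/eqP; apply: tr_adjmx_mul_eq0.
  by rewrite VV c0 mxtrace_scalar mul0rn.
pose s := (sqrtC c)^-1.
have s_real : s^* = s.
  by rewrite conj_Creal //; apply: ger0_real; rewrite invr_ge0 sqrtC_ge0 ltW.
exists (s *: V); split=> [|i]; last by rewrite -scalemxAr XV scalemxAl.
rewrite adjmxZ s_real -scalemxAr -scalemxAl VV scalerA scale_scalar_mx.
by rewrite /s -invfM -expr2 sqrtCK mulVf ?gt_eqF.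
Qed.

End Kraus.

Section Pauli.
Variable R : realType.
Local Notation C := R[i].
Local Notation P := (Pauli R).

Lemma ord2P (a : 'I_2) : a = ord0 \/ a = ord_max.
Proof. by case: a => [[|[|//]]] h; [left|right]; apply: val_inj. Qed.

Lemma ord3P (a : 'I_3) : [\/ a = 0%R, a = 1%R | a = ord_max].
Proof.
by case: a => [[|[|[|//]]]] h; [apply: Or31|apply: Or32|apply: Or33]; apply: val_inj.
Qed.

Lemma sum_ord2 (V : zmodType) (F : 'I_2 -> V) : \sum_a F a = F ord0 + F ord_max.
Proof. by rewrite !big_ord_recl big_ord0 addr0; congr (F _ + F _); apply: val_inj. Qed.

Lemma sum_ord3 (V : zmodType) (F : 'I_3 -> V) : \sum_a F a = F 0%R + F 1%R + F ord_max.
Proof.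
rewrite !big_ord_recl big_ord0 addr0 addrA.
by congr (F _ + F _ + F _); apply: val_inj.
Qed.

Lemma Pauli_selfadj : SM P.
Proof.
move=> i; apply/matrixP=> a b; rewrite adjmxE.
have [->|->|->] := ord3P i; have [->|->] := ord2P a; have [->|->] := ord2P b;
  rewrite /= !mxE /= ?complexiE ?rmorph0 ?rmorph1 ?rmorphN1 ?rmorphN /=
          ?conjCi ?opprK //.
Qed.

Lemma i_sqr : 'i * 'i = -1 :> C.
Proof. by rewrite -expr2 sqrCi. Qed.

Lemma Pauli_spectra : spectra P P.
Proof.
split=> //; split; first exact: Pauli_selfadj.
(* L_P(P) = 2 (I - SWAP) = W^* W, both rows of W being e_01 - e_10. *)
pose w (p : 'I_2 * 'I_2) : C := if p.1 == p.2 then 0 else if p.1 == ord0 then 1 else -1.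
pose W : 'M[C]_(2, 2 * 2) := \matrix_(r, k) w (mxtens_unindex k).
suff -> : pencil P P = adjmx W *m W by apply: psd_adjmx_mul.
apply/matrixP=> p q.
case: (mxtens_indexP p) => x c; case: (mxtens_indexP q) => y e.
rewrite pencil_entry !mxE sum_ord2 sum_ord3 !mxE !mxtens_indexK /w.
have [->|->] := ord2P x; have [->|->] := ord2P c; have [->|->] := ord2P y;
  have [->|->] := ord2P e; rewrite /= ?mxE /= ?complexiE ?rmorph0 ?rmorph1 ?rmorphN1;
  ring: i_sqr.
Qed.

Lemma Pauli_sqr i : P i *m P i = 1%:M.
Proof.
apply/matrixP=> a b; rewrite mxE sum_ord2.
by have [->|->|->] := ord3P i; have [->|->] := ord2P a; have [->|->] := ord2P b;
  rewrite /= !mxE /= ?complexiE; ring: i_sqr.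
Qed.

Lemma Pauli_commutant (W : 'M[C]_2) :
  P 0%R *m W = W *m P 0%R -> P 1%R *m W = W *m P 1%R -> W = (W ord0 ord0)%:M.
Proof.
move=> comm0 comm1.
have := congr1 (fun M : 'M[C]_2 => M ord0 ord_max) comm0.
have := congr1 (fun M : 'M[C]_2 => M ord_max ord0) comm0.
have := congr1 (fun M : 'M[C]_2 => M ord0 ord0) comm1.
have := congr1 (fun M : 'M[C]_2 => M ord0 ord_max) comm1.
rewrite /= !mxE !sum_ord2 /= !mxE /=.
rewrite !mul1r !mul0r !mulr0 !mulr1 !add0r !addr0 !mulrN1 !mulN1r.
move=> e11 e00 e10 e01.
have W01 : W ord0 ord_max = 0 by apply/eqP; rewrite -eqNr -e01.
have W10 : W ord_max ord0 = 0 by apply/eqP; rewrite -eqNr e10.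
apply/matrixP=> a b; rewrite !mxE.
by have [->|->] := ord2P a; have [->|->] := ord2P b;
  rewrite /= ?W01 ?W10 ?mulr1n ?mulr0n.
Qed.

Lemma Pauli_noncomm : P 0%R *m P 1%R != P 1%R *m P 0%R.
Proof.
apply/eqP => /(congr1 (fun M : 'M[C]_2 => M ord0 ord_max)).
rewrite !mxE !sum_ord2 /= !mxE /= !mul1r !mul0r addr0 add0r => eq1N1.
by move/eqP: eq1N1; rewrite eq_sym eqNr oner_eq0.
Qed.

End Pauli.

Section PauliKraus.
Variable R : realType.
Local Notation C := R[i].
Local Notation P := (Pauli R).

Definition sgn2 (a : 'I_2) : C := if a == ord0 then 1 else -1.
Definition flip2 (a : 'I_2) : 'I_2 := if a == ord0 then ord_max else ord0.

(* [kraus_ops B l] is J times row l of B reshaped into a 2 x n matrix, where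
   J = [[0,1],[-1,0]]. *)
Definition kraus_ops n (B : 'M[C]_(2 * n)) (l : 'I_(2 * n)) : 'M[C]_(2, n) :=
  \matrix_(a, c) (sgn2 a * B l (mxtens_index (flip2 a, c))).

Lemma kraus_ops_sum n (B : 'M[C]_(2 * n)) (M : 'M[C]_2) :
  \sum_l adjmx (kraus_ops B l) *m M *m kraus_ops B l =
  \matrix_(c, e) \sum_a \sum_b sgn2 a * sgn2 b * M a b *
     (adjmx B *m B) (mxtens_index (flip2 a, c)) (mxtens_index (flip2 b, e)).
Proof.
apply/matrixP=> c e; rewrite summxE !mxE.
under eq_bigr do rewrite mxE.
transitivity (\sum_l \sum_b \sum_a
    adjmx (kraus_ops B l) c a * M a b * kraus_ops B l b e).
  by apply: eq_bigr => l _; apply: eq_bigr => b _; rewrite !mxE mulr_suml.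
rewrite exchange_big /=; under eq_bigr do rewrite exchange_big /=.
rewrite exchange_big /=; apply: eq_bigr => a _; apply: eq_bigr => b _.
rewrite mxE mulr_sumr; apply: eq_bigr => l _.
have sgn2_conj : (sgn2 a)^* = sgn2 a.
  by rewrite /sgn2; case: ifP; rewrite ?conjC1 ?conjCN1.
by rewrite !adjmxE !mxE rmorphM /= sgn2_conj; ring.
Qed.

Definition Pauli_kraus n (X : tup R 3 n) : 'I_(2 * n) -> 'M[C]_(2, n) :=
  kraus_ops (psd_root (2^-1 *: pencil P X)).

Lemma Pauli_kraus_spec n (X : tup R 3 n) : spectra P X ->
  \sum_l adjmx (Pauli_kraus X l) *m Pauli_kraus X l = 1%:M /\
  forall i, \sum_l adjmx (Pauli_kraus X l) *m P i *m Pauli_kraus X l = X i.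
Proof.
move=> [_ [_ psdX]]; rewrite /Pauli_kraus; set B := psd_root _.
have BB x c y e : (adjmx B *m B) (mxtens_index (x, c)) (mxtens_index (y, e)) =
    2^-1 * ((x == y)%:R * (c == e)%:R - \sum_i P i x y * X i c e).
  rewrite -psd_rootP ?[LHS]mxE ?pencil_entry //.
  by apply: psdZ => //; rewrite invr_ge0 ler0n.
split.
  transitivity (\sum_l adjmx (kraus_ops B l) *m 1%:M *m kraus_ops B l).
    by apply: eq_bigr => l _; rewrite mulmx1.
  rewrite kraus_ops_sum; apply/matrixP=> c e; rewrite !mxE.
  rewrite !sum_ord2 !BB /flip2 /= !sum_ord3 !mxE /sgn2 /=.
  by field.
move=> i; rewrite kraus_ops_sum; apply/matrixP=> c e; rewrite !mxE.
rewrite !sum_ord2 !BB /flip2 /= !sum_ord3 !mxE /sgn2 /=.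
by have [->|->|->] := ord3P i; rewrite /= !mxE /= ?complexiE; field: (i_sqr R).
Qed.
End PauliKraus.

Section PauliSpectrahedron.
Variable R : realType.
Local Notation P := (Pauli R).

Definition Pauli_mcterm n (X : tup R 3 n) (l : 'I_(2 * n)) : mcterm R 3 n :=
  existT _ 2%N (P, Pauli_kraus X l).

Lemma spectra_Pauli_mcc n (X : tup R 3 n) : spectra P X ->
  is_mcc (gpoint P) (Pauli_mcterm X) /\ mcc_val (Pauli_mcterm X) = X.
Proof.
move=> DX; have [sumK1 sumKP] := Pauli_kraus_spec DX.
split; first by split=> // l; split=> //; apply: gpoint_refl.
by apply: functional_extensionality => i; rewrite -sumKP.
Qed.

Lemma spectra_Pauli_sub_matconvex (K : gset R 3) n (X : tup R 3 n) :
  matconvex K -> K 2%N P -> (0 < n)%N -> spectra P X -> K n X.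
Proof.
move=> [_ convK] KP n0 DX; have [[_ sumV1] <-] := spectra_Pauli_mcc DX.
by apply: convK => //; split.
Qed.

Lemma pencil_spectra_Pauli_psd n m (X : tup R 3 n) (Y : tup R 3 m) :
  spectra P X -> spectra P Y -> psd (pencil Y X).
Proof.
move=> [_ [_ psdX]] DY; have [sumK1 sumKP] := Pauli_kraus_spec DY.
have -> : Y = fun i => \sum_l adjmx (Pauli_kraus Y l) *m P i *m Pauli_kraus Y l.
  by apply: functional_extensionality => i; rewrite sumKP.
by rewrite pencil_kraus //; apply: psd_sum => l _; apply: psd_congr.
Qed.

Lemma spectra_Pauli_self_polar : gset_eq (spectra P) (polar (spectra P)).
Proof.
move=> n n0 X; split=> [DX | [_ [selfX psdL]]].
  have [_ [selfX _]] := DX; split=> //; split=> // m Y _.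
  exact: pencil_spectra_Pauli_psd.
by split=> //; split=> //; apply: psdL => //; apply: Pauli_spectra.
Qed.

Lemma Pauli_bar_tconj : Pauli_bar R = tconj P.
Proof.
apply: functional_extensionality => i; apply/matrixP=> a b.
have [->|->|->] := ord3P i; have [->|->] := ord2P a; have [->|->] := ord2P b;
  rewrite /= !mxE /= ?complexiE ?rmorph0 ?rmorph1 ?rmorphN1 ?rmorphN /=
          ?conjCi ?oppr0 //.
Qed.

Lemma spectra_Pauli_mconv : gset_eq (spectra P) (mconv (gpoint P)).
Proof.
move=> n n0 X; split=> [DX | [_ hull]].
  split=> // K convK PK; apply: spectra_Pauli_sub_matconvex => //.
  by apply: PK => //; apply: gpoint_refl.
apply: hull; first exact: spectra_matconvex.
move=> m m0 Y [e PY]; subst Y; case: m / e {m0}.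
have -> : (fun i => castmx (erefl 2%N, erefl 2%N) (P i)) = P.
  by apply: functional_extensionality => i; rewrite castmx_id.
exact: Pauli_spectra.
Qed.

End PauliSpectrahedron.

Section FreeExtreme.
Variable R : realType.
Local Notation C := R[i].
Local Notation P := (Pauli R).

Lemma Pauli_free_extreme : free_extreme (spectra P) P.
Proof.
split=> //; split; first exact: Pauli_spectra.
move=> k ts [Dts sumV1] V_neq0 valP j.
pose K l := Pauli_kraus (mc_pt (ts l)).
have specK l := Pauli_kraus_spec (Dts l).2.
pose W l r := K l r *m mc_V (ts l).
have sumWM (M : 'M[C]_2) : \sum_l \sum_r adjmx (W l r) *m M *m W l r =
    \sum_l adjmx (mc_V (ts l)) *m (\sum_r adjmx (K l r) *m M *m K l r) *m mc_V (ts l).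
  apply: eq_bigr => l _; rewrite mulmx_sumr mulmx_suml; apply: eq_bigr => r _.
  by rewrite /W adjmxM !mulmxA.
have sumW1 : \sum_l \sum_r adjmx (W l r) *m W l r = 1%:M.
  transitivity (\sum_l \sum_r adjmx (W l r) *m 1%:M *m W l r).
    by apply: eq_bigr => l _; apply: eq_bigr => r _; rewrite mulmx1.
  rewrite sumWM -[in RHS]sumV1; apply: eq_bigr => l _.
  by under eq_bigr do rewrite mulmx1; rewrite (specK l).1 mulmx1.
have sumWP i : \sum_l \sum_r adjmx (W l r) *m P i *m W l r = P i.
  by rewrite sumWM -[in RHS]valP; apply: eq_bigr => l _; rewrite (specK l).2.
have commW i :=
  kraus_fixed_involution_comm (Pauli_selfadj R i) (@Pauli_sqr R i) sumW1 (sumWP i).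
have [U0 [isoU0 intertwU0]] :=
  kraus_scalar_intertwiner (V_neq0 j) (specK j).1 (specK j).2
    (fun r => Pauli_commutant (commW 0%R j r) (commW 1%R j r)).
exact: intertwiner_ueq_dsum (spectra_matconvex P) (Dts j).1 (Dts j).2 isoU0 intertwU0.
Qed.

Lemma free_extreme_Pauli_ueq n (X : tup R 3 n) : (0 < n)%N ->
  free_extreme (spectra P) X -> ueq X P.
Proof.
move=> n0 [_ [DX extX]]; have [sumK1 sumKP] := Pauli_kraus_spec DX.
(* Free extremality only constrains terms with V_j != 0, so zero Kraus
   operators are discarded. *)
pose K := Pauli_kraus X; pose S := [pred l | K l != 0].
pose ts (j : 'I_#|S|) : mcterm R 3 n := existT _ 2%N (P, K (enum_val j)).
have sum_S (F : 'I_(2 * n) -> 'M[C]_n) : (forall l, K l = 0 -> F l = 0) ->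
    \sum_l F l = \sum_(j < #|S|) F (enum_val j).
  move=> F0; rewrite -(big_enum_val (A := S)) (bigID (mem S)) /=.
  rewrite [X in _ + X]big1 ?addr0 //.
  by move=> l; rewrite !inE negbK => /eqP; apply: F0.
have mcc_ts : is_mcc (spectra P) ts.
  split=> [j|]; first by split=> //; apply: Pauli_spectra.
  by rewrite -sumK1 (sum_S (fun l => adjmx (K l) *m K l)) // => l ->; rewrite mulmx0.
have val_ts : mcc_val ts = X.
  apply: functional_extensionality => i; rewrite -sumKP /mcc_val.
  by rewrite (sum_S (fun l => adjmx (K l) *m P i *m K l)) // => l ->; rewrite mulmx0.
have S_gt0 : (0 < #|S|)%N.
  rewrite lt0n; apply/eqP => S0; have [_] := mcc_ts.
  rewrite big1 => [/(congr1 (fun M : 'M[C]_n => M (Ordinal n0) (Ordinal n0)))|j].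
    by rewrite !mxE eqxx => /eqP; rewrite eq_sym oner_eq0.
  by have := ltn_ord j; rewrite {2}S0.
have [/ueq_sym // | [m [Z [m0 [_ PXZ]]]]] :=
  extX _ ts mcc_ts (fun j => enum_valP j) val_ts (Ordinal S_gt0).
have {}PXZ : ueq P (dsum X Z) := PXZ.
have dim2 := ueq_dim PXZ.
have n1 : n = 1%N by lia.
have m1 : m = 1%N by lia.
subst n m; have := Pauli_noncomm R.
by rewrite (ueq_comm PXZ (dsum11_comm X Z 0%R 1%R)) eqxx.
Qed.

Lemma spectra_Pauli_mconv_free_extreme :
  gset_eq (spectra P) (mconv (free_extreme (spectra P))).
Proof.
move=> n n0 X; split=> [DX | [_ hull]].
  split=> // K convK extK; apply: spectra_Pauli_sub_matconvex => //.
  by apply: extK => //; apply: Pauli_free_extreme.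
apply: hull; first exact: spectra_matconvex.
by move=> m m0 Y [_ [DY _]].
Qed.

End FreeExtreme.

Theorem mainTheorem1 (R : realType) :
  gset_eq (spectra (Pauli R)) (polar (spectra (Pauli R))) /\
  gset_eq (spectra (Pauli_bar R)) (polar (spectra (Pauli_bar R))) /\
  gset_eq (spectra (Pauli R)) (mconv (gpoint (Pauli R))) /\
  free_extreme (spectra (Pauli R)) (Pauli R) /\
  (forall n (X : tup R 3 n), (0 < n)%N ->
     free_extreme (spectra (Pauli R)) X -> ueq X (Pauli R)) /\
  gset_eq (spectra (Pauli R)) (mconv (free_extreme (spectra (Pauli R)))).
Proof.
split; first exact: spectra_Pauli_self_polar.
split; first by rewrite Pauli_bar_tconj; apply/self_polar_tconj/spectra_Pauli_self_polar.
split; first exact: spectra_Pauli_mconv.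
split; first exact: Pauli_free_extreme.
split; first exact: free_extreme_Pauli_ueq.
exact: spectra_Pauli_mconv_free_extreme.
Qed.
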